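(* Let $S\subset\mathbb{R}^q$ be compact and $\ell:\mathbb{R}^q\times\mathbb{R}^q\to(0,1)$ continuous. Let $s\in S$ and let $(\xi_k)_{k\in\mathbb{N}}\subset\mathbb{R}^q$ be $n$-periodic (i.e. $\xi_{k+n}=\xi_k$ for all $k$). Let $d_1,d_2,\dots\in\{0,1\}$ be independent random variables with $\Pr(d_k=1)=\ell(s,\xi_k)$. Let $c_1,\dots,c_M\in S$ be distinct, let $\hat p_0:\{1,\dots,M\}\to(0,1)$ with $\sum_i\hat p_0(i)=1$, and define $\hat p_k$ by $$\hat p_k(i\mid d_{1:k};\xi_{1:k})=\frac{g(d_k\mid c_i;\xi_k)\,\hat p_{k-1}(i\mid d_{1:k-1};\xi_{1:k-1})}{\sum_{j=1}^M g(d_k\mid c_j;\xi_k)\,\hat p_{k-1}(j\mid d_{1:k-1};\xi_{1:k-1})},$$ where $g(d\mid x;\xi)=\ell(x,\xi)^d(1-\ell(x,\xi))^{1-d}$. Suppose $c_j=s$ for some $j$, and suppose $$\bigcap_{k=1}^n\{x\in S:\ell(x,\xi_k)=\ell(s,\xi_k)\}=\{s\}.$$ Then $\hat p_k(j\mid d_{1:k};\xi_{1:k})\to 1$ almost surely. *)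

From HB Require Import structures.
From mathcomp Require Import all_boot all_order all_algebra.
From mathcomp Require Import all_classical all_reals all_analysis.
Set Implicit Arguments. Unset Strict Implicit. Unset Printing Implicit Defensive.
Import Order.TTheory GRing.Theory Num.Theory numFieldNormedType.Exports.
Local Open Scope ring_scope.
Local Open Scope classical_set_scope.

Definition lik (R : realType) (q : nat) (l : 'rV[R]_q -> 'rV[R]_q -> R)
  (b : bool) (x xi : 'rV[R]_q) : R :=
  if b then l x xi else 1 - l x xi.

(* posterior p_k(i | d_{1:k}; xi_{1:k}); observations d_k, xi_k indexed from 1 *)
Fixpoint posterior (R : realType) (q M : nat) (l : 'rV[R]_q -> 'rV[R]_q -> R)
  (c : 'I_M -> 'rV[R]_q) (p0 : 'I_M -> R) (xi : nat -> 'rV[R]_q)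
  (dd : nat -> bool) (k : nat) : 'I_M -> R :=
  match k with
  | 0 => p0
  | k'.+1 => fun i =>
      lik l (dd k'.+1) (c i) (xi k'.+1) * posterior l c p0 xi dd k' i /
      \sum_(j < M) lik l (dd k'.+1) (c j) (xi k'.+1) * posterior l c p0 xi dd k' j
  end.

Definition mutually_independent (d : measure_display) (T : measurableType d)
  (R : realType) (P : probability T R) (d' : measure_display)
  (U : measurableType d') (X : nat -> T -> U) : Prop :=
  forall (F : seq nat) (B : nat -> set U),
    uniq F -> (forall k, measurable (B k)) ->
    P (\bigcap_(k in [set k | k \in F]) (X k @^-1` B k)) =
    (\prod_(k <- F) P (X k @^-1` B k))%E.

From HB Require Import structures.
From mathcomp Require Import all_boot all_order all_algebra.
From mathcomp Require Import all_classical all_reals all_analysis.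
From mathcomp Require Import ring lra.
Import Order.TTheory GRing.Theory Num.Theory numFieldNormedType.Exports.
Local Open Scope ring_scope.
Local Open Scope classical_set_scope.
Set Implicit Arguments. Unset Strict Implicit. Unset Printing Implicit Defensive.

(* For a wrong candidate x the likelihood ratio L_N(x) / L_N(s) is the square of
   a product of independent factors sqrt (g(d_k | x) / g(d_k | s)).  Their means
   are Bhattacharyya coefficients of Bernoulli laws: at most 1, and, by
   identifiability and periodicity of xi, some coefficient < 1 recurs in every
   period.  Markov's inequality then bounds the probability that the product
   exceeds gamma^(N/n), for some gamma < 1, geometrically in N/n, so by
   Borel-Cantelli the ratio tends to 0 almost surely.  Finally the posterior of
   c_j = s is 1 / (1 + sum of prior-weighted likelihood ratios). *)

Section real_lemmas.
Variable R : realType.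

Lemma sum_expr_divn_mul (b : R) (n m : nat) : (0 < n)%N ->
  \sum_(0 <= N < m * n) b ^+ (N %/ n) = n%:R * \sum_(0 <= a < m) b ^+ a.
Proof.
move=> n_gt0; elim: m => [|m IHm]; first by rewrite mul0n !big_geq ?mulr0.
rewrite mulSnr (big_cat_nat _ (leq_addr _ _)) //= IHm big_nat_recr //= mulrDr.
congr (_ + _); rewrite mulr_natl -[in RHS](addKn (m * n) n) -sumr_const_nat.
apply: eq_big_nat => N /andP[mnN Nmn]; congr (_ ^+ _); apply/eqP.
by rewrite eqn_leq leq_divRL // mnN andbT -ltnS ltn_divLR // mulSnr.
Qed.

Lemma sum_expr_le (b : R) (m : nat) : 0 <= b < 1 ->
  \sum_(0 <= a < m) b ^+ a <= (1 - b)^-1.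
Proof.
move=> /andP[b_ge0 b_lt1]; have b1_gt0 : 0 < 1 - b by rewrite subr_gt0.
rewrite -(ler_pM2l b1_gt0) mulfV ?gt_eqF // big_mkord -opprB mulNr -subrX1 opprB.
by rewrite lerBlDr lerDl exprn_ge0.
Qed.

Lemma sum_expr_divn_le (b : R) (n K : nat) : (0 < n)%N -> 0 <= b < 1 ->
  \sum_(0 <= N < K) b ^+ (N %/ n) <= n%:R * (1 - b)^-1.
Proof.
move=> n_gt0 b01; have /andP[b_ge0 _] := b01.
apply: (@le_trans _ _ (\sum_(0 <= N < K * n) b ^+ (N %/ n))).
  rewrite [leRHS](big_cat_nat _ (n := K)) //= ?leq_pmulr //.
  by rewrite lerDl sumr_ge0 // => N _; rewrite exprn_ge0.
by rewrite sum_expr_divn_mul // ler_wpM2l // sum_expr_le.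
Qed.

Lemma divn_cvg_infty (n : nat) : (0 < n)%N -> (fun N => (N %/ n)%N) @ \oo --> \oo.
Proof.
move=> n_gt0 A [m _ mA]; exists (m * n)%N => // N /= mnN.
by apply: mA; rewrite /= leq_divRL.
Qed.

Lemma expr_divn_cvg0 (g : R) (n : nat) : (0 < n)%N -> 0 <= g < 1 ->
  g ^+ (N %/ n) @[N --> \oo] --> 0.
Proof.
move=> n_gt0 /andP[g_ge0 g_lt1]; apply: cvg_comp (divn_cvg_infty n_gt0) _.
by apply: cvg_expr; rewrite ger0_norm.
Qed.

Lemma prod_periodic_le (r : nat -> R) (n k0 : nat) :
  (k0 < n)%N -> (forall k, 0 <= r k <= 1) -> (forall k, r (k + n)%N = r k) ->
  forall N, \prod_(0 <= k < N) r k <= r k0 ^+ (N %/ n).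
Proof.
move=> k0n r01 r_per N; have r_ge0 k : 0 <= r k by case/andP: (r01 k).
suff prod_le m : forall N, (m * n <= N)%N -> \prod_(0 <= k < N) r k <= r k0 ^+ m.
  exact/prod_le/leq_divM.
elim: m => [|m IHm] {}N mnN; first by rewrite expr0 prodr_ile1.
have nN : (n <= N)%N by apply: leq_trans mnN; rewrite mulSn leq_addr.
rewrite (big_cat_nat _ (n := n)) //= exprS; apply: ler_pM; rewrite ?prodr_ge0 //.
  rewrite big_mkord (bigD1 (Ordinal k0n)) //= -[leRHS]mulr1.
  by rewrite ler_pM ?prodr_ge0 ?prodr_ile1.
rewrite -{1}[n]add0n big_addn; under eq_bigr do rewrite r_per.
by apply: IHm; rewrite leq_subRL // addnC -mulSn.
Qed.

Definition bhattacharyya (x y : R) : R :=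
  Num.sqrt (x * y) + Num.sqrt ((1 - x) * (1 - y)).

Lemma bhattacharyya_ge0 (x y : R) : 0 <= bhattacharyya x y.
Proof. by rewrite addr_ge0 ?sqrtr_ge0. Qed.

(* AM-GM on both summands; the two upper bounds add up to 1. *)
Lemma bhattacharyya_leif (x y : R) : 0 <= x <= 1 -> 0 <= y <= 1 ->
  bhattacharyya x y <= 1 ?= iff (x == y).
Proof.
move=> /andP[x_ge0 x_le1] /andP[y_ge0 y_le1].
have x1_ge0 : 0 <= 1 - x by rewrite subr_ge0.
have y1_ge0 : 0 <= 1 - y by rewrite subr_ge0.
have := leifD (leif_mean_square (Num.sqrt x) (Num.sqrt y))
              (leif_mean_square (Num.sqrt (1 - x)) (Num.sqrt (1 - y))).
rewrite !sqr_sqrtr // !eqr_sqrt // (inj_eq (subrI 1)) andbb -!sqrtrM //.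
by congr (_ <= _ ?= iff _); field.
Qed.

Lemma mulr_sqrt_div (x y : R) : 0 <= x -> 0 < y ->
  y * Num.sqrt (x / y) = Num.sqrt (x * y).
Proof.
move=> x_ge0 y_gt0; have sy_gt0 : 0 < Num.sqrt y by rewrite sqrtr_gt0.
rewrite !sqrtrM // sqrtrV ?ltW //.
have {1}-> : y = Num.sqrt y ^+ 2 by rewrite sqr_sqrtr ?ltW.
by field; rewrite gt_eqF.
Qed.

End real_lemmas.

Lemma probability_bool (d : measure_display) (T : measurableType d) (R : realType)
  (P : probability T R) (X : T -> bool) (p : R) :
  measurable_fun setT X -> P [set t | X t = true] = p%:E ->
  forall b, P [set t | X t = b] = (if b then p else 1 - p)%:E.
Proof.
move=> X_meas PXtrue [] //.
have -> : [set t | X t = false] = ~` [set t | X t = true].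
  by apply/seteqP; split => t /=; case: (X t).
rewrite probability_setC ?PXtrue ?EFinB //.
rewrite -[A in measurable A]/(X @^-1` [set true]) -[X @^-1` _]setTI.
exact: X_meas.
Qed.

Lemma borel_cantelli_expr_divn (d : measure_display) (T : measurableType d)
  (R : realType) (P : probability T R) (A : nat -> set T) (b : R) (n : nat) :
  (0 < n)%N -> 0 <= b < 1 -> (forall N, measurable (A N)) ->
  (forall N, (P (A N) <= (b ^+ (N %/ n))%:E)%E) ->
  {ae P, forall t, \forall N \near \oo, ~ A N t}.
Proof.
move=> n_gt0 b01 A_meas PA_le; have /andP[b_ge0 _] := b01.
have limsup_meas : measurable (lim_sup_set A).
  by apply: bigcap_measurableType => k _; apply: bigcup_measurable.
have limsup0 : P (lim_sup_set A) = 0.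
  apply: lim_sup_set_cvg0 => //.
  apply: (@le_lt_trans _ _ (\sum_(0 <= N <oo) (b ^+ (N %/ n))%:E)%E).
    by apply: lee_nneseries => // N _; apply: PA_le.
  apply: (@le_lt_trans _ _ (n%:R * (1 - b)^-1)%:E); last exact: ltry.
  apply: lime_le.
    by apply: is_cvg_nneseries => N _ _; rewrite lee_fin exprn_ge0.
  by apply: nearW => K; rewrite sumEFin lee_fin sum_expr_divn_le.
exists (lim_sup_set A); split => // t /= not_ev m _.
apply: contrapT => not_Am; apply: not_ev.
by exists m => // N /= mN AN; apply: not_Am; exists N.
Qed.

Section independent_bool_sequence.
Variables (R : realType) (dsp : measure_display) (T : measurableType dsp).
Variables (P : probability T R) (X : nat -> T -> bool) (p : nat -> bool -> R).
Hypothesis X_meas : forall k, measurable_fun setT (X k).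
Hypothesis X_indep : mutually_independent P (fun k => X k.+1).
Hypothesis X_law : forall k b, P [set t | X k.+1 t = b] = (p k b)%:E.

Definition prefix N t : {ffun 'I_N -> bool} := [ffun i : 'I_N => X i.+1 t].

(* Writes [prefix N t = f] as an intersection of preimages, the form to which
   [mutually_independent] applies. *)
Definition prefix_constraint N (f : {ffun 'I_N -> bool}) k : set bool :=
  if insub k is Some i then [set f i] else setT.

Lemma law_ge0 k b : 0 <= p k b.
Proof. by rewrite -lee_fin -X_law measure_ge0. Qed.

Lemma measurable_X_preimage k (B : set bool) : measurable (X k @^-1` B).
Proof. by rewrite -[_ @^-1` _]setTI; apply: X_meas. Qed.

Lemma prefix_eqE N f : [set t | prefix N t = f] =
  \bigcap_(k in [set k | k \in iota 0 N]) (X k.+1 @^-1` prefix_constraint f k).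
Proof.
apply/seteqP; split => t /=.
  move=> <- k /=; rewrite mem_iota add0n => kN.
  by rewrite /prefix_constraint insubT /= ffunE.
move=> in_constraints; apply/ffunP => i; rewrite ffunE.
have := in_constraints (val i); rewrite /prefix_constraint valK.
by apply; rewrite /= mem_iota add0n ltn_ord.
Qed.

Lemma measurable_prefix_eq N f : measurable [set t | prefix N t = f].
Proof.
rewrite prefix_eqE; apply: bigcap_measurableType => k _.
exact: measurable_X_preimage.
Qed.

Lemma prob_prefix_eq N f :
  P [set t | prefix N t = f] = (\prod_(i < N) p i (f i))%:E.
Proof.
rewrite prefix_eqE X_indep ?iota_uniq // -prodEFin.
rewrite -[N in iota 0 N]subn0 -/(index_iota 0 N) big_mkord.
by apply: eq_bigr => i _; rewrite /prefix_constraint valK X_law.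
Qed.

Lemma prefix_predE N (Q : {pred {ffun 'I_N -> bool}}) :
  [set t | prefix N t \in Q] = \bigcup_(f in [set` Q]) [set t | prefix N t = f].
Proof.
apply/seteqP; split => t /=; first by move=> Qt; exists (prefix N t).
by move=> [f /= Qf ->].
Qed.

Lemma measurable_prefix_pred N (Q : {pred {ffun 'I_N -> bool}}) :
  measurable [set t | prefix N t \in Q].
Proof.
rewrite prefix_predE; apply: fin_bigcup_measurable; first exact: finite_finset.
by move=> f _; apply: measurable_prefix_eq.
Qed.

Lemma prob_prefix_pred N (Q : {pred {ffun 'I_N -> bool}}) :
  P [set t | prefix N t \in Q] = (\sum_(f in Q) \prod_(i < N) p i (f i))%:E.
Proof.
rewrite prefix_predE measure_fin_bigcup; first last.
- by move=> f _; apply: measurable_prefix_eq.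
- by move=> f g _ _ [t [<- <-]].
- exact: finite_finset.
rewrite -(bigfs _ (enum_uniq (pred_of_simpl predT))); last first.
  by move=> f _; rewrite mem_enum.
rewrite big_enum_cond /= -sumEFin; apply: eq_bigr => f _.
exact: prob_prefix_eq.
Qed.

Lemma prod_ge_prefixE N (u : nat -> bool -> R) a :
  [set t | a <= \prod_(i < N) u i (X i.+1 t)] =
  [set t | prefix N t \in [pred f : {ffun 'I_N -> bool} | a <= \prod_(i < N) u i (f i)]].
Proof.
have prefixE t : \prod_(i < N) u i (prefix N t i) = \prod_(i < N) u i (X i.+1 t).
  by apply: eq_bigr => i _; rewrite ffunE.
by apply/seteqP; split => t /=; rewrite inE prefixE.
Qed.

Lemma measurable_prod_ge N (u : nat -> bool -> R) a :
  measurable [set t | a <= \prod_(i < N) u i (X i.+1 t)].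
Proof. by rewrite prod_ge_prefixE; apply: measurable_prefix_pred. Qed.

(* Markov's inequality; by independence the mean of the product is the product
   of the means, computed here by summing over all boolean prefixes [f]. *)
Lemma markov_indep_prod N (u : nat -> bool -> R) a :
  0 < a -> (forall k b, 0 <= u k b) ->
  (P [set t | (a <= \prod_(i < N) u i (X i.+1 t))%R] <=
   (a^-1 * \prod_(i < N) \sum_b p i b * u i b)%:E)%E.
Proof.
move=> a_gt0 u_ge0; rewrite prod_ge_prefixE prob_prefix_pred //.
set Q := [pred f | _]; rewrite lee_fin bigA_distr_bigA /= mulr_sumr.
rewrite [leRHS](bigID (fun f => f \in Q)) /=.
apply: ler_wpDr.
  apply: sumr_ge0 => f _; apply: mulr_ge0; first by rewrite invr_ge0 ltW.
  by apply: prodr_ge0 => i _; rewrite mulr_ge0 ?law_ge0 ?u_ge0.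
apply: ler_sum => f; rewrite inE => a_le.
rewrite big_split /= mulrA mulrAC -[leLHS]mul1r.
apply: ler_wpM2r; first by apply: prodr_ge0 => i _; apply: law_ge0.
by rewrite mulrC ler_pdivlMr // mul1r.
Qed.

Lemma indep_prod_cvg0_ae (u : nat -> bool -> R) (n : nat) (rho : R) :
  (forall k b, 0 <= u k b) -> (0 < n)%N -> 0 <= rho < 1 ->
  (forall N, \prod_(k < N) \sum_b p k b * u k b <= rho ^+ (N %/ n)) ->
  {ae P, forall t, \prod_(k < N) u k (X k.+1 t) @[N --> \oo] --> 0}.
Proof.
move=> u_ge0 n_gt0 /andP[rho_ge0 rho_lt1] mean_le.
pose g := (1 + rho) / 2.
have g_gt0 : 0 < g by rewrite /g; lra.
have g_lt1 : g < 1 by rewrite /g; lra.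
have rho_g01 : 0 <= rho / g < 1.
  by rewrite divr_ge0 ?(ltW g_gt0) //= ltr_pdivrMr // mul1r /g; lra.
pose A N := [set t | g ^+ (N %/ n) <= \prod_(k < N) u k (X k.+1 t)].
have PA_le N : (P (A N) <= ((rho / g) ^+ (N %/ n))%:E)%E.
  have g_pow_gt0 : 0 < g ^+ (N %/ n) by rewrite exprn_gt0.
  apply: le_trans (markov_indep_prod N g_pow_gt0 u_ge0) _.
  rewrite lee_fin [leRHS]exprMn exprVn [leLHS]mulrC.
  by apply: ler_wpM2r; rewrite ?invr_ge0 ?exprn_ge0 ?(ltW g_gt0).
have A_meas N : measurable (A N) by apply: measurable_prod_ge.
apply: filterS (borel_cantelli_expr_divn n_gt0 rho_g01 A_meas PA_le).
move=> t ev_notA.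
apply: (@squeeze_cvgr _ _ _ _ (fun=> 0) (fun N => g ^+ (N %/ n))).
- apply: filterS ev_notA => N /negP; rewrite /A /= -ltNge => prod_lt.
  by rewrite prodr_ge0 ?ltW.
- exact: cvg_cst.
- by apply: expr_divn_cvg0; rewrite // ltW.
Qed.
End independent_bool_sequence.

Section posterior.
Variables (R : realType) (q M : nat) (l : 'rV[R]_q -> 'rV[R]_q -> R).
Variables (c : 'I_M -> 'rV[R]_q) (p0 : 'I_M -> R) (xi : nat -> 'rV[R]_q).
Variable dd : nat -> bool.
Hypothesis l01 : forall x y, 0 < l x y < 1.

Definition likelihood (x : 'rV[R]_q) N : R :=
  \prod_(k < N) lik l (dd k.+1) x (xi k.+1).

Lemma lik_gt0 b x y : 0 < lik l b x y.
Proof. by have /andP[l_gt0 l_lt1] := l01 x y; case: b; rewrite /lik ?subr_gt0. Qed.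

Lemma likelihood_gt0 x N : 0 < likelihood x N.
Proof. by apply: prodr_gt0 => k _; apply: lik_gt0. Qed.

Hypothesis p0_gt0 : forall i, 0 < p0 i.

Lemma evidence_gt0 (i : 'I_M) N : 0 < \sum_(m < M) p0 m * likelihood (c m) N.
Proof.
rewrite (bigD1 i) //= ltr_pwDl ?mulr_gt0 ?likelihood_gt0 //.
by apply: sumr_ge0 => m _; rewrite mulr_ge0 ?ltW ?likelihood_gt0.
Qed.

Hypothesis p0_sum1 : \sum_(i < M) p0 i = 1.

Lemma posteriorE N i : posterior l c p0 xi dd N i =
  p0 i * likelihood (c i) N / \sum_(m < M) p0 m * likelihood (c m) N.
Proof.
elim: N i => [|N IHN] i.
  rewrite /likelihood big_ord0 mulr1; under eq_bigr do rewrite big_ord0 mulr1.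
  by rewrite p0_sum1 divr1.
have likelihoodS x :
    likelihood x N.+1 = lik l (dd N.+1) x (xi N.+1) * likelihood x N.
  by rewrite /likelihood big_ord_recr mulrC.
have evidenceS : \sum_(m < M) p0 m * likelihood (c m) N.+1 =
    \sum_(m < M) lik l (dd N.+1) (c m) (xi N.+1) * (p0 m * likelihood (c m) N).
  by apply: eq_bigr => m _; rewrite likelihoodS mulrCA.
have := evidence_gt0 i N.+1; rewrite evidenceS => Y_gt0.
have := evidence_gt0 i N => Z_gt0.
rewrite /= IHN; under eq_bigr do rewrite IHN mulrA.
rewrite -mulr_suml likelihoodS.
by field; rewrite !gt_eqF.
Qed.

Lemma posterior_cvg1 j :
  (forall i, i != j ->
     likelihood (c i) N / likelihood (c j) N @[N --> \oo] --> (0 : R)) ->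
  posterior l c p0 xi dd N j @[N --> \oo] --> (1 : R).
Proof.
move=> ratio_cvg0.
pose odds N := \sum_(m < M | m != j)
  p0 m / p0 j * (likelihood (c m) N / likelihood (c j) N).
have posterior_oddsE N : posterior l c p0 xi dd N j = (1 + odds N)^-1.
  have Lj_gt0 := likelihood_gt0 (c j) N; have p0j_gt0 := p0_gt0 j.
  have -> : odds N = (\sum_(m < M | m != j) p0 m * likelihood (c m) N) /
                     (p0 j * likelihood (c j) N).
    by rewrite mulr_suml; apply: eq_bigr => m _; field; rewrite !gt_eqF.
  have := evidence_gt0 j N; rewrite posteriorE (bigD1 j) //=.
  set Z := \sum_(m < M | m != j) _ => evidence_gt0.
  by field; rewrite !gt_eqF ?mulr_gt0.
under eq_cvg do rewrite posterior_oddsE.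
have odds_cvg0 : odds N @[N --> \oo] --> (0 : R).
  have := @cvg_big R 'I_M +%R 0 (fun m => m != j) add_continuous nat \oo
    (index_enum _)
    (fun m N => p0 m / p0 j * (likelihood (c m) N / likelihood (c j) N)) (fun=> 0) _.
  rewrite big1 //; apply => m mj.
  rewrite -(mulr0 (p0 m / p0 j)); apply: cvgM; first exact: cvg_cst.
  exact: ratio_cvg0.
have := cvgV _ (cvgD (cvg_cst (1 : R)) odds_cvg0).
by rewrite addr0 invr1; apply; apply: oner_neq0.
Qed.
End posterior.

Lemma separating_index (A B : Type) (V : eqType) (S : set A) (f : A -> B -> V)
  (s x : A) (xi : nat -> B) (n : nat) :
  \bigcap_(k in [set k | (1 <= k <= n)%N]) [set y | S y /\ f y (xi k) = f s (xi k)]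
    = [set s] ->
  S x -> x <> s -> exists2 k0, (k0 < n)%N & f x (xi k0.+1) != f s (xi k0.+1).
Proof.
move=> ident Sx x_neq_s; apply: contrapT => no_sep; apply: x_neq_s.
suff : [set s] x by [].
rewrite -ident => -[|k] //= kn; split=> //; apply/eqP/negPn/negP => sep.
by apply: no_sep; exists k.
Qed.

Section consistency.
Variables (R : realType) (q : nat) (l : 'rV[R]_q -> 'rV[R]_q -> R).
Variables (s : 'rV[R]_q) (xi : nat -> 'rV[R]_q) (n : nat).
Variables (dsp : measure_display) (T : measurableType dsp) (P : probability T R).
Variable dv : nat -> T -> bool.
Hypothesis l01 : forall x y, 0 < l x y < 1.
Hypothesis n_gt0 : (0 < n)%N.
Hypothesis xi_periodic : forall k, xi (k + n)%N = xi k.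
Hypothesis dv_meas : forall k, measurable_fun setT (dv k).
Hypothesis dv_indep : mutually_independent P (fun k => dv k.+1).
Hypothesis dv_law : forall k b, P [set t | dv k.+1 t = b] = (lik l b s (xi k.+1))%:E.

Local Notation likelihood_at t := (likelihood l xi (fun k => dv k t)).

Lemma likelihood_ratio_cvg0_ae x k0 :
  (k0 < n)%N -> l x (xi k0.+1) != l s (xi k0.+1) ->
  {ae P, forall t, likelihood_at t x N / likelihood_at t s N @[N --> \oo] --> (0 : R)}.
Proof.
move=> k0n sep.
have l01W y z : 0 <= l y z <= 1 by have /andP[? ?] := l01 y z; rewrite !ltW.
pose u k b := Num.sqrt (lik l b x (xi k.+1) / lik l b s (xi k.+1)).
pose r k := bhattacharyya (l x (xi k.+1)) (l s (xi k.+1)).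
have mean_u k : \sum_b lik l b s (xi k.+1) * u k b = r k.
  by rewrite big_bool !mulr_sqrt_div ?ltW ?(lik_gt0 l01).
have r01 k : 0 <= r k <= 1 by rewrite bhattacharyya_ge0 (bhattacharyya_leif _ _).1.
have r_lt1 : r k0 < 1 by rewrite (lt_leif (bhattacharyya_leif _ _)).
have r_periodic k : r (k + n)%N = r k by rewrite /r -addSn xi_periodic.
have mean_prod_le N :
    \prod_(k < N) \sum_b lik l b s (xi k.+1) * u k b <= r k0 ^+ (N %/ n).
  by under eq_bigr do rewrite mean_u; rewrite -(big_mkord xpredT) prod_periodic_le.
have u_ge0 k b : 0 <= u k b by apply: sqrtr_ge0.
have r0_01 : 0 <= r k0 < 1 by rewrite r_lt1 andbT; case/andP: (r01 k0).
have := indep_prod_cvg0_ae dv_meas dv_indep dv_law u_ge0 n_gt0 r0_01 mean_prod_le.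
apply: filterS => t prod_u_cvg0.
have ratioE N : likelihood_at t x N / likelihood_at t s N =
    (\prod_(k < N) u k (dv k.+1 t)) ^+ 2.
  rewrite /likelihood -prodf_div -prodrXl; apply: eq_bigr => k _.
  by rewrite sqr_sqrtr // divr_ge0 // ltW ?(lik_gt0 l01).
by rewrite (funext ratioE) -(mulr0 0); apply: cvgM.
Qed.
End consistency.

Unset Implicit Arguments. Set Strict Implicit. Set Printing Implicit Defensive.

Theorem corollary1 (R : realType) (q : nat) (S : set 'rV[R]_q)
  (l : 'rV[R]_q -> 'rV[R]_q -> R) (s : 'rV[R]_q) (xi : nat -> 'rV[R]_q)
  (n : nat) (dsp : measure_display) (T : measurableType dsp)
  (P : probability T R) (dv : nat -> T -> bool) (M : nat)
  (c : 'I_M -> 'rV[R]_q) (p0 : 'I_M -> R) (j : 'I_M) :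
  compact S ->
  continuous (fun z : 'rV[R]_q * 'rV[R]_q => l z.1 z.2) ->
  (forall x y, 0 < l x y < 1) ->
  S s ->
  (0 < n)%N ->
  (forall k, xi (k + n)%N = xi k) ->
  (forall k, measurable_fun setT (dv k)) ->
  mutually_independent P (fun k => dv k.+1) ->
  (forall k, (1 <= k)%N -> P [set t | dv k t = true] = (l s (xi k))%:E) ->
  (forall i, S (c i)) ->
  injective c ->
  (forall i, 0 < p0 i < 1) ->
  \sum_(i < M) p0 i = 1 ->
  c j = s ->
  \bigcap_(k in [set k | (1 <= k <= n)%N]) [set x | S x /\ l x (xi k) = l s (xi k)]
    = [set s] ->
  {ae P, forall t, posterior l c p0 xi (fun k => dv k t) k j @[k --> \oo] --> (1 : R)}.
Proof.
(* Compactness and continuity only matter for infinitely many candidates. *)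
move=> _ _ l01 _ n_gt0 xi_periodic dv_meas dv_indep dv_true c_in_S c_inj p0_01
  p0_sum1 cj_s ident.
have p0_gt0 i : 0 < p0 i by case/andP: (p0_01 i).
have dv_law k b : P [set t | dv k.+1 t = b] = (lik l b s (xi k.+1))%:E.
  exact: probability_bool (dv_meas k.+1) (dv_true k.+1 (ltn0Sn k)) b.
have ratio_cvg0 i : {ae P, forall t, i != j ->
    likelihood l xi (fun k => dv k t) (c i) N /
    likelihood l xi (fun k => dv k t) (c j) N @[N --> \oo] --> (0 : R)}.
  have [->|ij] := eqVneq i j; first exact: aeW.
  have ci_neq_s : c i <> s by rewrite -cj_s => /c_inj /eqP; rewrite (negPf ij).
  have [k0 k0n sep] := separating_index ident (c_in_S i) ci_neq_s.
  apply: filterS (likelihood_ratio_cvg0_ae l01 n_gt0 xi_periodic dv_meas dv_indep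
    dv_law k0n sep) => t ratio_cvg0 _.
  by rewrite cj_s.
apply: filterS (filter_forall _ ratio_cvg0) => t ratios_cvg0.
exact: posterior_cvg1 l01 p0_gt0 p0_sum1 _ (fun i => ratios_cvg0 i).
Qed.
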